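(* Let $(X,d_X)$ be a metric space, $\gamma\ge1$ and $d$ a positive integer with $\gamma_d(X)<\gamma<\infty$. Then for every $k\in\mathbb Z$, $X$ admits a $2^k$-bounded $\big(\frac1{100\gamma d^2},\frac1{d+1}\big)$-padded stochastic decomposition.
   Context: $X$ has Nagata dimension at most $d$ with constant $\gamma$ if for every $s>0$ there is a family $\mathscr C$ of nonempty subsets of $X$ covering $X$, with $\mathrm{diam}(C)\le\gamma s$ for all $C\in\mathscr C$, such that every $A\subseteq X$ with $\mathrm{diam}(A)\le s$ meets at most $d+1$ members of $\mathscr C$. $\gamma_d(X)$ is the infimum of such $\gamma$ ($\infty$ if none). For a partition $\mathscr P$ and $x\in X$, $\mathscr P(x)$ is the part containing $x$. A $\Delta$-bounded stochastic decomposition is a probability distribution over partitions of $X$ such that almost surely all parts have diameter $\le\Delta$; it is $(\varepsilon,\delta)$-padded if $\Pr[\mathscr P(x)\supseteq B_X(x,\varepsilon\Delta)]\ge\delta$ for every $x\in X$ ($B_X$ the closed ball). *)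

From HB Require Import structures.
From mathcomp Require Import all_boot all_order all_algebra.
From mathcomp Require Import all_classical all_reals all_analysis.
Set Implicit Arguments. Unset Strict Implicit. Unset Printing Implicit Defensive.
Import Order.TTheory GRing.Theory Num.Theory.
Local Open Scope classical_set_scope.
Local Open Scope ring_scope.

Section Defs.
Context {R : realType} {X : Type}.

Definition is_metric (dist : X -> X -> R) : Prop :=
  (forall x y, 0 <= dist x y) /\
  (forall x y, dist x y = 0 <-> x = y) /\
  (forall x y, dist x y = dist y x) /\
  (forall x y z, dist x z <= dist x y + dist y z).

Definition diam (dist : X -> X -> R) (A : set X) : \bar R :=
  ereal_sup [set (dist x y)%:E | x in A & y in A].

Definition closed_ball (dist : X -> X -> R) (x : X) (r : R) : set X :=
  [set y | dist x y <= r].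

Definition nagata_with (dist : X -> X -> R) (d : nat) (g : R) : Prop :=
  forall s : R, 0 < s ->
    exists F : set (set X),
      (forall C, F C -> C !=set0) /\
      (forall x, exists C, F C /\ C x) /\
      (forall C, F C -> (diam dist C <= (g * s)%:E)%E) /\
      (forall A : set X, (diam dist A <= s%:E)%E ->
         ([set C | F C /\ C `&` A !=set0] #<= `I_(d.+1))%card).

(* gamma_d(X): infimum of admissible constants (+oo if none) *)
Definition gamma_nagata (dist : X -> X -> R) (d : nat) : \bar R :=
  ereal_inf [set g%:E | g in nagata_with dist d].

Definition is_partition (P : set (set X)) : Prop :=
  (forall C, P C -> C !=set0) /\
  (forall C D, P C -> P D -> C `&` D !=set0 -> C = D) /\
  (forall x, exists C, P C /\ C x).

Definition part_of (P : set (set X)) (x : X) : set X :=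
  [set y | exists C, P C /\ C x /\ C y].

Definition padded_stoch_decomp (dist : X -> X -> R) (Delta eps delta : R) : Prop :=
  exists (disp : measure_display) (Omega : measurableType disp)
         (P : probability Omega R) (Part : Omega -> set (set X)),
    (forall w, is_partition (Part w)) /\
    {ae P, forall w, forall C, Part w C -> (diam dist C <= Delta%:E)%E} /\
    (forall x,
       measurable [set w | closed_ball dist x (eps * Delta) `<=` part_of (Part w) x] /\
       (delta%:E <= P [set w | closed_ball dist x (eps * Delta) `<=` part_of (Part w) x])%E).

End Defs.

From Pilot Require Import Defs.
From HB Require Import structures.
From mathcomp Require Import all_boot all_order all_algebra.
From mathcomp Require Import all_classical all_reals all_analysis.
From mathcomp.algebra_tactics Require Import ring lra.
Import Order.TTheory GRing.Theory Num.Theory.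
Local Open Scope ring_scope.

(* Take a cover [F] from the Nagata bound at scale [s = 50 d r] and a threshold
   [t] drawn uniformly from [2r, 4r, ..., 2nr] with [n = 2(d+1)].  Two points
   lie in the same part when the same members of [F] come within [t] of them,
   so parts have diameter at most [gamma s + t].  The ball [B(x, r)] can only
   be split when some member of [F] meets [B(x, t + r)] but not [B(x, t - r)];
   since thresholds are [2r] apart, each member does this for at most one [t],
   and at most [d + 1] members come near [x].  Hence at least half of the
   thresholds pad [x]. *)

Section padding.
Local Open Scope classical_set_scope.

Section uniform_nat.
Context {R : realType}.
Variable n : nat.
Hypothesis n_gt0 : (0 < n)%N.

Definition counting_below : measure nat R := msum (fun i => \d_i) n.

(* [\d_0] is only the fallback of [mnormalize] for the null measure [n = 0]. *)
Definition uniform_nat : probability nat R := mnormalize counting_below \d_0%N.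

Lemma uniform_natE (A : set nat) :
  uniform_nat A = (#|[set i : 'I_n | `[< A i >]]%SET|%:R / n%:R)%:E.
Proof.
have counting_belowE (B : set nat) :
    counting_below B = (#|[set i : 'I_n | `[< B i >]]%SET|%:R)%:E.
  rewrite /counting_below /msum /= -sum1_card natr_sum -sumEFin big_mkcond /=.
  apply: eq_bigr => i _; rewrite /= diracE inE.
  by case: asboolP => Bi; [rewrite (mem_set Bi) | rewrite (memNset Bi)].
rewrite /uniform_nat /=; unfold mnormalize; rewrite !counting_belowE.
have -> : #|[set i : 'I_n | `[< @setT nat i >]]%SET| = n.
  by rewrite -[RHS]card_ord; apply: eq_card => i; rewrite inE; apply/asboolP.
by rewrite eqe pnatr_eq0 gtn_eqF //= counting_belowE -EFinM.
Qed.

End uniform_nat.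

Lemma diam_leP {R : realType} {X : Type} (dist : X -> X -> R) (A : set X) G :
  (diam dist A <= G%:E)%E <-> (forall a b, A a -> A b -> dist a b <= G).
Proof.
split=> [AG a b Aa Bb | AG].
  rewrite -lee_fin; apply: le_trans AG.
  by apply: ereal_sup_ubound; exists a => //; exists b.
by apply: ge_ereal_sup => _ [a Aa [b Ab <-]]; rewrite lee_fin; apply: AG.
Qed.

Lemma leq_card_in_II {T : finType} {U : Type} {B : {set T}} {S : set U}
    {m : nat} (phi : T -> U) :
  {in B &, injective phi} -> (forall i, i \in B -> S (phi i)) ->
  (S #<= `I_m)%card -> (#|B| <= m)%N.
Proof.
move=> phi_inj phiS /pcard_leP[f].
rewrite cardE -(size_map (f \o phi)) -[X in (_ <= X)%N](size_iota 0).
apply: uniq_leq_size.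
  rewrite map_inj_in_uniq ?enum_uniq // => i j; rewrite !mem_enum => iB jB /=.
  by move/(inj (mem_set (phiS i iB)) (mem_set (phiS j jB))); apply: phi_inj.
move=> _ /mapP[i iB ->]; rewrite mem_iota add0n /=.
by apply: (funS (s := f)); apply: phiS; rewrite -mem_enum.
Qed.

Section threshold_partition.
Context {R : realType} {X : Type}.
Variable dist : X -> X -> R.
Hypothesis dist_metric : is_metric dist.
Variable F : set (set X).

Let distxx x : dist x x = 0.
Proof. by case: dist_metric => _ [/(_ x x) [_ ->]]. Qed.

Let distC x y : dist x y = dist y x.
Proof. by case: dist_metric => _ [_ []]. Qed.

Let dist_triangle x y z : dist x z <= dist x y + dist y z.
Proof. by case: dist_metric => _ [_ [_]]. Qed.

Definition nagata_cover (G s : R) (d : nat) :=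
  (forall x, exists C, F C /\ C x) /\
  (forall C, F C -> (diam dist C <= G%:E)%E) /\
  (forall A, (diam dist A <= s%:E)%E ->
     ([set C | F C /\ C `&` A !=set0] #<= `I_d.+1)%card).

Definition meets_ball (C : set X) (x : X) (t : R) :=
  exists2 c, C c & dist x c < t.

Definition members_near (t : R) (y : X) := [set C | F C /\ meets_ball C y t].

Definition threshold_class (t : R) (y : X) :=
  [set z | members_near t z = members_near t y].

Definition threshold_partition (t : R) :=
  [set K | exists y, K = threshold_class t y].

Definition cut_at (x : X) (r t : R) (C : set X) :=
  meets_ball C x (t + r) /\ ~ meets_ball C x (t - r).

Lemma meets_ballW {C x t} t' : t <= t' -> meets_ball C x t -> meets_ball C x t'.
Proof. by move=> tt' [c Cc xc]; exists c => //; apply: lt_le_trans tt'. Qed.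

Lemma meets_ball_shift {C x y r t} :
  dist x y <= r -> meets_ball C y t -> meets_ball C x (t + r).
Proof.
move=> xy [c Cc yc]; exists c => //.
by apply: le_lt_trans (dist_triangle x y c) _; rewrite addrC ltr_leD.
Qed.

Lemma is_partition_threshold_partition t : is_partition (threshold_partition t).
Proof.
split; [|split].
- by move=> _ [y ->]; exists y.
- move=> _ _ [y1 ->] [y2 ->] [z [zy1 zy2]].
  rewrite /threshold_class in zy1 zy2 *.
  by apply/seteqP; split => w /= ->; rewrite -?zy1 -?zy2.
- by move=> x; exists (threshold_class t x); split; [exists x|].
Qed.

Lemma threshold_class_sub_part_of t x :
  threshold_class t x `<=` part_of (threshold_partition t) x.
Proof. by move=> y xy; exists (threshold_class t x); split; [exists x|]. Qed.

Lemma diam_threshold_partition {t G} : 0 < t ->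
  (forall x, exists C, F C /\ C x) ->
  (forall C, F C -> (diam dist C <= G%:E)%E) ->
  forall K, threshold_partition t K -> (diam dist K <= (G + t)%:E)%E.
Proof.
move=> t_gt0 F_cover F_diam _ [y ->]; apply/diam_leP => a b ya yb.
have [C [FC Ca]] := F_cover a.
have : members_near t a C by split => //; exists a; rewrite ?distxx.
rewrite /threshold_class /= in ya yb; rewrite ya -yb => -[_ [c Cc bc]].
apply: le_trans (dist_triangle a c b) _; rewrite [dist c b]distC.
by apply: lerD; [move/diam_leP: (F_diam C FC); apply | apply: ltW].
Qed.

Lemma cut_at_unique {x r t1 t2 C} :
  t1 + r <= t2 - r -> cut_at x r t1 C -> cut_at x r t2 C -> False.
Proof. by move=> t12 [near1 _] [_]; apply; apply: meets_ballW near1. Qed.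

Lemma closed_ball_sub_threshold_part x r t : 0 <= r ->
  (forall C, F C -> ~ cut_at x r t C) ->
  Defs.closed_ball dist x r `<=` part_of (threshold_partition t) x.
Proof.
move=> r_ge0 uncut y xy; apply: threshold_class_sub_part_of.
have near_inner C : F C -> meets_ball C x (t + r) -> meets_ball C x (t - r).
  by move=> FC near; apply: contrapT => far; apply: (uncut C FC).
apply/seteqP; split => C [FC near]; split => //.
- apply: meets_ballW (near_inner C FC (meets_ball_shift xy near)).
  by rewrite lerBlDr lerDl.
- rewrite -(subrK r t); apply: meets_ball_shift.
    by rewrite distC; exact: xy.
  by apply: near_inner => //; apply: meets_ballW near; rewrite lerDl.
Qed.

Lemma card_cut_thresholds x r T (n d : nat) (t : nat -> R) :
  (forall i j, (i < j < n)%N -> t i + r <= t j - r) ->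
  (forall i, (i < n)%N -> t i <= T) ->
  ([set C | F C /\ C `&` [set c | dist x c < T + r] !=set0] #<= `I_d.+1)%card ->
  (#|[set i : 'I_n | `[< exists2 C, F C & cut_at x r (t i) C >]]%SET| <= d.+1)%N.
Proof.
move=> t_sep t_le F_mult; set B := [set i : 'I_n | _]%SET.
have cut_member i : exists C, i \in B -> F C /\ cut_at x r (t i) C.
  have [[C FC cutC]|uncut] := pselect (exists2 C, F C & cut_at x r (t i) C).
    by exists C.
  by exists set0; rewrite inE => /asboolP.
have [member member_cut] := choice cut_member.
apply: (leq_card_in_II member _ _ F_mult) => [i j iB jB eq_ij | i /member_cut].
  have [_ cut_i] := member_cut i iB; have [_ cut_j] := member_cut j jB.
  rewrite eq_ij in cut_i.
  case: (ltngtP i j) => [ij|ji|/val_inj //]; exfalso.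
  - by apply: (cut_at_unique _ cut_i cut_j); apply: t_sep; rewrite ij ltn_ord.
  - by apply: (cut_at_unique _ cut_j cut_i); apply: t_sep; rewrite ji ltn_ord.
move=> [FC [[c Cc xc] _]]; split => //; exists c; split => //=.
by apply: lt_le_trans xc _; rewrite lerD2r t_le.
Qed.

Lemma threshold_padded_stoch_decomp (G s r Delta eps : R) (n d : nat) :
  (0 < n)%N -> 0 < r -> eps * Delta = r ->
  G + n%:R * (2 * r) <= Delta -> 2 * (n%:R * (2 * r) + r) <= s ->
  nagata_cover G s d ->
  padded_stoch_decomp dist Delta eps ((n - d.+1)%:R / n%:R).
Proof.
move=> n_gt0 r_gt0 eps_Delta Delta_ge ball_le [F_cover [F_diam F_mult]].
(* Reducing [w] modulo [n] bounds every part surely, not just almost surely. *)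
pose t w : R := ((w %% n).+1)%:R * (2 * r).
have t_gt0 w : 0 < t w by rewrite mulr_gt0 ?ltr0Sn //; lra.
have t_le w : t w <= n%:R * (2 * r).
  by rewrite ler_wpM2r ?ler_nat ?ltn_pmod //; lra.
have t_sep i j : (i < j < n)%N -> t i + r <= t j - r.
  move=> /andP[ij jn]; rewrite /t !modn_small ?(ltn_trans ij) //.
  have : (i.+1)%:R + 1 <= (j.+1)%:R :> R by rewrite natr1 ler_nat.
  nra.
exists default_measure_display, nat, (@uniform_nat R n),
  (fun w => threshold_partition (t w)).
split; [|split].
- by move=> w; apply: is_partition_threshold_partition.
- apply: aeW => w K /(diam_threshold_partition (t_gt0 w) F_cover F_diam).
  move/le_trans; apply; rewrite lee_fin.
  by apply: le_trans Delta_ge; rewrite lerD2l.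
(* Measurability is free: every subset of [nat] is measurable. *)
move=> x; split => //; rewrite eps_Delta (uniform_natE _ n_gt0) lee_fin.
rewrite ler_wpM2r ?invr_ge0 ?ler0n // ler_nat.
set cut := [set i : 'I_n | `[< exists2 C, F C & cut_at x r (t i) C >]]%SET.
have cut_le : (#|cut| <= d.+1)%N.
  apply: (card_cut_thresholds x r (n%:R * (2 * r)) n d t t_sep) => [i _|].
    exact: t_le.
  apply: F_mult; apply/diam_leP => a b /= xa xb; apply: le_trans ball_le.
  by apply: le_trans (dist_triangle a x b) _; rewrite [dist a x]distC; lra.
apply: leq_trans (subset_leq_card (_ : ~: cut \subset _)).
  by rewrite cardsCs finset.setCK card_ord leq_sub2l.
apply/fintype.subsetP => i; rewrite !inE => /asboolPn uncut.
apply: closed_ball_sub_threshold_part; first exact: ltW.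
by move=> C FC cutC; apply: uncut; exists C.
Qed.

End threshold_partition.

Lemma padded_stoch_decompW {R : realType} {X : Type} {dist : X -> X -> R}
    {Delta eps delta delta' : R} :
  delta' <= delta -> padded_stoch_decomp dist Delta eps delta ->
  padded_stoch_decomp dist Delta eps delta'.
Proof.
move=> le_delta [disp [T [P [Part [Part_partition [Part_diam Part_pad]]]]]].
exists disp, T, P, Part; split => //; split => // x.
by have [Ex_measurable Ex_ge] := Part_pad x; split => //; apply: le_trans Ex_ge.
Qed.

Lemma nagata_diam_budget {R : realType} (g g' r : R) (d : nat) :
  (0 < d)%N -> g' <= g -> 1 <= g -> 0 < r ->
  g' * (50 * d%:R * r) + (2 * d.+1)%:R * (2 * r) <= 100 * g * d%:R ^+ 2 * r.
Proof.
move=> d_gt0 g'g g_ge1 r_gt0.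
have d_ge1 : 1 <= d%:R :> R by rewrite ler1n.
have dr_ge0 : 0 <= d%:R * r :> R by rewrite mulr_ge0 ?ler0n ?ltW.
have : 0 <= (g - g') * (d%:R * r) by rewrite mulr_ge0 // subr_ge0.
have : 0 <= (g - 1) * (d%:R * r * d%:R).
  by apply: mulr_ge0; [lra | apply: mulr_ge0].
have : 0 <= g * (d%:R * r) * (d%:R - 1).
  by apply: mulr_ge0; [apply: mulr_ge0 => //; lra | lra].
have : 0 <= (d%:R * r) * (d%:R - 1) by apply: mulr_ge0 => //; lra.
have : 0 <= r * (d%:R - 1) by apply: mulr_ge0; lra.
rewrite natrM -addn1 natrD; lra.
Qed.

Lemma nagata_ball_budget {R : realType} {r : R} {d : nat} :
  (0 < d)%N -> 0 < r -> 2 * ((2 * d.+1)%:R * (2 * r) + r) <= 50 * d%:R * r.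
Proof.
move=> d_gt0 r_gt0; have d_ge1 : 1 <= d%:R :> R by rewrite ler1n.
have : 0 <= r * (d%:R - 1) by apply: mulr_ge0; lra.
rewrite natrM -addn1 natrD; lra.
Qed.

Lemma inv_succ_le_half {R : realType} {d : nat} : (0 < d)%N ->
  1 / d.+1%:R <= (2 * d.+1 - d.+1)%:R / (2 * d.+1)%:R :> R.
Proof.
move=> d_gt0; have d_ge1 : 1 <= d%:R :> R by rewrite ler1n.
rewrite mul2n -addnn addnK natrD -addn1 natrD.
have -> : (d%:R + 1%:R) / (d%:R + 1%:R + (d%:R + 1%:R)) = 1 / 2 :> R.
  by field; lra.
by rewrite ler_pdivrMr ?mul1r ?ler_pdivlMl; lra.
Qed.

End padding.

Theorem lemma5p2 (R : realType) (X : Type) (dist : X -> X -> R)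
  (hmetric : is_metric dist) (g : R) (d : nat)
  (hg1 : 1 <= g) (hd : (0 < d)%N)
  (hgamma : (gamma_nagata dist d < g%:E)%E) :
  forall k : int,
    padded_stoch_decomp dist ((2 : R) ^ k)
      (1 / (100 * g * (d%:R) ^+ 2)) (1 / (d.+1)%:R).
Proof.
move=> k.
have [_ [g' nagata_g' <-]] := ereal_inf_lt hgamma; rewrite lte_fin => g'_lt_g.
set eps := 1 / (100 * g * d%:R ^+ 2).
have eps_gt0 : 0 < eps.
  by rewrite divr_gt0 // !mulr_gt0 ?exprn_gt0 ?ltr0n //; lra.
set r := eps * 2 ^ k.
have r_gt0 : 0 < r by rewrite mulr_gt0 // exprz_gt0.
have Delta_eq : 2 ^ k = 100 * g * d%:R ^+ 2 * r.
  by rewrite /r /eps; field; rewrite pnatr_eq0 -lt0n hd; lra.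
set s := 50 * d%:R * r.
have s_gt0 : 0 < s by apply: mulr_gt0 r_gt0; rewrite mulr_gt0 ?ltr0n.
have [F [_ F_nagata]] := nagata_g' s s_gt0.
apply: padded_stoch_decompW (inv_succ_le_half hd) _.
apply: (threshold_padded_stoch_decomp _ hmetric F _ s r _ _ (2 * d.+1) d _
  r_gt0 erefl _ _ F_nagata) => //.
- by rewrite Delta_eq; apply: nagata_diam_budget => //; apply: ltW.
- exact: nagata_ball_budget hd r_gt0.
Qed.
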